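(* For any $x\in\mathbb{R}^n$, $\frac{\mu_1}{2}d(x,P)^2\le f(x)\le\frac{\mu_2}{2}d(x,P)^2$, where $0<\mu_1=\frac{1}{mL^2}\le\mu_2=\min\{1,\frac{\beta}{m}\lambda_{\max}(A^TA)\}\le1$.
   Context: Let $A\in\mathbb{R}^{m\times n}$ have rows $a_1^T,\dots,a_m^T$ with $\|a_i\|_2=1$, and $b\in\mathbb{R}^m$; assume $Ax\le b$ is consistent and let $P=\{x:Ax\le b\}$, $\mathcal{P}(x)$ the Euclidean projection onto $P$, $d(x,P)=\|x-\mathcal{P}(x)\|$, $t^+=\max\{t,0\}$ (entrywise on vectors). Fix an integer $1\le\beta\le m$. Sampling distribution $\mathbb{S}$ at $x$: $\tau\subseteq\{1,\dots,m\}$ with $|\tau|=\beta$ uniformly at random among all $\binom m\beta$ subsets, and $i^*\in\tau$ maximizing $(a_i^Tx-b_i)^+$ over $\tau$; $\mathbb{E}_{\mathbb{S}}$ is expectation over $\tau$. $f(x)=\mathbb{E}_{\mathbb{S}}[\frac12|(a_{i^*}^Tx-b_{i^*})^+|^2]$. $L>0$ is a Hoffman constant: $d(x,P)^2\le L^2\|(Ax-b)^+\|^2$ for all $x$. *)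

From mathcomp Require Import all_boot all_order all_algebra.
From mathcomp Require Import classical_sets reals.
Set Implicit Arguments. Unset Strict Implicit. Unset Printing Implicit Defensive.
Import Order.TTheory GRing.Theory Num.Theory.
Local Open Scope ring_scope.
Local Open Scope classical_set_scope.

Section Defs.
Variable R : realType.

Definition enorm (k : nat) (v : 'cV[R]_k) : R := Num.sqrt (\sum_i v i 0 ^+ 2).

Definition pos (t : R) : R := Num.max t 0.
Definition posv (k : nat) (v : 'cV[R]_k) : 'cV[R]_k := \col_i pos (v i 0).

Definition polyh (m n : nat) (A : 'M[R]_(m, n)) (b : 'cV[R]_m) : set 'cV[R]_n :=
  [set x | forall i, (A *m x) i 0 <= b i 0].

Definition dist_set (n : nat) (x : 'cV[R]_n) (S : set 'cV[R]_n) : R :=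
  inf [set enorm (x - y) | y in S].

Definition lambda_max (n : nat) (M : 'M[R]_n) : R :=
  sup [set a | eigenvalue M a].

Definition resid (m n : nat) (A : 'M[R]_(m, n)) (b : 'cV[R]_m) (x : 'cV[R]_n)
  (i : 'I_m) : R := pos ((A *m x) i 0 - b i 0).

(* f(x) = E_tau [ 1/2 |(a_{i*}^T x - b_{i*})^+|^2 ], tau uniform among the
   subsets of size beta, i* maximizing the residual over tau; the value of the
   residual at i* is the maximum over tau of the residuals. *)
Definition fobj (m n : nat) (beta : nat) (A : 'M[R]_(m, n)) (b : 'cV[R]_m)
  (x : 'cV[R]_n) : R :=
  ('C(m, beta)%:R)^-1 *
  \sum_(tau : {set 'I_m} | #|tau| == beta)
     (2^-1 * (\big[Num.max/0]_(i in tau) resid A b x i) ^+ 2).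

End Defs.

From mathcomp Require Import all_boot all_order all_algebra.
From mathcomp Require Import classical_sets reals.
From mathcomp Require Import ring lra.
Set Implicit Arguments. Unset Strict Implicit. Unset Printing Implicit Defensive.
Import Order.TTheory GRing.Theory Num.Theory.
Local Open Scope ring_scope.

(* Write r_i = (a_i^T x - b_i)^+ and d = d(x, P).  For a beta-subset tau, the
   squared maximum of r over tau lies between (1/beta) sum_{i in tau} r_i^2 and
   sum_{i in tau} r_i^2; since each index lies in C(m-1, beta-1)
   = beta C(m, beta) / m of the subsets, averaging gives
   |r|^2 / (2m) <= f(x) <= beta |r|^2 / (2m).  The Hoffman bound |r|^2 >= d^2 / L^2
   yields the lower estimate.  For every y in P, r_i <= |a_i^T (x - y)| <= |x - y|,
   so each r_i <= d (whence f(x) <= d^2 / 2) and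
   |r|^2 <= |A (x - y)|^2 <= lambda_max(A^T A) |x - y|^2.  The last step is the
   Rayleigh bound: the supremum rho of |A z|^2 over unit vectors z is an eigenvalue
   of A^T A, because otherwise rho I - A^T A would be positive semidefinite and
   invertible, hence coercive, while rho is approached by unit vectors.  Finally
   mu1 <= mu2 follows by evaluating both estimates at a point at distance >= 1
   from P. *)

Section Norms.
Variable R : realType.

Lemma entryD m n (X Y : 'M[R]_(m, n)) i j : (X + Y) i j = X i j + Y i j.
Proof. by rewrite mxE. Qed.

Lemma entryB m n (X Y : 'M[R]_(m, n)) i j : (X - Y) i j = X i j - Y i j.
Proof. by rewrite !mxE. Qed.

Lemma entryZ m n a (X : 'M[R]_(m, n)) i j : (a *: X) i j = a * X i j.
Proof. by rewrite mxE. Qed.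

Definition sqnorm k (v : 'cV[R]_k) : R := \sum_i v i 0 ^+ 2.

Lemma sqnorm_ge0 k (v : 'cV[R]_k) : 0 <= sqnorm v.
Proof. by apply: sumr_ge0 => i _; apply: sqr_ge0. Qed.

Lemma enorm_sqr k (v : 'cV[R]_k) : enorm v ^+ 2 = sqnorm v.
Proof. by rewrite /enorm sqr_sqrtr // sqnorm_ge0. Qed.

Lemma sqnormE k (v : 'cV[R]_k) : sqnorm v = (v^T *m v) 0 0.
Proof. by rewrite mxE; apply: eq_bigr => i _; rewrite mxE expr2. Qed.

Lemma sqnormZ k a (v : 'cV[R]_k) : sqnorm (a *: v) = a ^+ 2 * sqnorm v.
Proof. by rewrite /sqnorm mulr_sumr; apply: eq_bigr => i _; rewrite mxE exprMn. Qed.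

Lemma sqnorm_eq0 k (v : 'cV[R]_k) : (sqnorm v == 0) = (v == 0).
Proof.
apply/idP/eqP => [|->]; last by rewrite /sqnorm big1 // => i _; rewrite mxE expr0n.
rewrite psumr_eq0 => [/allP v0|i _]; last exact: sqr_ge0.
apply/matrixP => i j; rewrite (ord1 j) mxE.
by apply/eqP; rewrite -sqrf_eq0; apply: v0; apply: mem_index_enum.
Qed.

Lemma sqnorm0 k : sqnorm (0 : 'cV[R]_k) = 0.
Proof. by apply/eqP; rewrite sqnorm_eq0. Qed.

Lemma sqnorm_delta k (j : 'I_k) : sqnorm (delta_mx j 0 : 'cV[R]_k) = 1.
Proof.
rewrite /sqnorm (bigD1 j) //= big1 => [|i /negbTE ij]; last by rewrite mxE ij expr0n.
by rewrite mxE !eqxx expr1n addr0.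
Qed.

Lemma enorm_eq1_dim_gt0 k (v : 'cV[R]_k) : enorm v = 1 -> (0 < k)%N.
Proof.
case: k v => // v; rewrite /enorm /sqnorm big_ord0 sqrtr0 => /esym/eqP.
by rewrite oner_eq0.
Qed.

Lemma quadratic_ge0_sqr_le (a b c : R) : 0 <= a ->
  (forall t, 0 <= a * t ^+ 2 + 2 * b * t + c) -> b ^+ 2 <= a * c.
Proof.
move=> a_ge0 quad_ge0; have c_ge0 := quad_ge0 0.
rewrite expr0n /= !mulr0 !add0r in c_ge0.
have [a0|a_neq0] := eqVneq a 0.
  rewrite a0 mul0r; have [->|b_neq0] := eqVneq b 0; first by rewrite expr0n.
  have := quad_ge0 (- (c + 1) / (2 * b)); rewrite a0 mul0r add0r.
  have -> : 2 * b * (- (c + 1) / (2 * b)) = - (c + 1) by field.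
  lra.
have a_gt0 : 0 < a by rewrite lt0r a_neq0.
have := quad_ge0 (- b / a).
have -> : a * (- b / a) ^+ 2 + 2 * b * (- b / a) + c = c - b ^+ 2 / a by field.
by rewrite subr_ge0 ler_pdivrMr // mulrC.
Qed.

Lemma cauchy_schwarz_sum k (u w : 'I_k -> R) :
  (\sum_i u i * w i) ^+ 2 <= (\sum_i u i ^+ 2) * (\sum_i w i ^+ 2).
Proof.
apply: quadratic_ge0_sqr_le => [|t]; first by apply: sumr_ge0 => i _; apply: sqr_ge0.
have -> : (\sum_i u i ^+ 2) * t ^+ 2 + 2 * (\sum_i u i * w i) * t + \sum_i w i ^+ 2
    = \sum_i (u i * t + w i) ^+ 2.
  rewrite mulr_suml mulr_sumr mulr_suml -!big_split /=.
  by apply: eq_bigr => i _; ring.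
by apply: sumr_ge0 => i _; apply: sqr_ge0.
Qed.

Lemma sqr_row_mulmx_le m k (N : 'M[R]_(m, k)) i z :
  (N *m z) i 0 ^+ 2 <= (\sum_j N i j ^+ 2) * sqnorm z.
Proof. by rewrite mxE; apply: cauchy_schwarz_sum. Qed.

Lemma sqnorm_mulmx_le m k (N : 'M[R]_(m, k)) z :
  sqnorm (N *m z) <= (\sum_i \sum_j N i j ^+ 2) * sqnorm z.
Proof. by rewrite mulr_suml; apply: ler_sum => i _; apply: sqr_row_mulmx_le. Qed.

End Norms.

Section QuadraticForms.
Variables (R : realType) (k : nat) (M : 'M[R]_k).

Definition qform (u v : 'cV[R]_k) : R := (u^T *m M *m v) 0 0.

Lemma qform_delta_l j z : qform (delta_mx j 0) z = (M *m z) j 0.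
Proof. by rewrite /qform trmx_delta -mulmxA -rowE mxE. Qed.

Lemma qform_delta j : qform (delta_mx j 0) (delta_mx j 0) = M j j.
Proof. by rewrite qform_delta_l -colE mxE. Qed.

Hypothesis M_sym : M^T = M.
Hypothesis M_psd : forall w, 0 <= qform w w.

Lemma qformC u v : qform u v = qform v u.
Proof.
have tr11 (X : 'M[R]_1) : X 0 0 = X^T 0 0 by rewrite mxE.
by rewrite /qform tr11 !trmx_mul trmxK M_sym mulmxA.
Qed.

Lemma qform_line u v t : qform (t *: v + u) (t *: v + u) =
  qform v v * t ^+ 2 + 2 * qform u v * t + qform u u.
Proof.
rewrite /qform; have -> : (t *: v + u)^T = t *: v^T + u^T by rewrite linearD linearZ.
rewrite !mulmxDl !mulmxDr -!scalemxAl -!scalemxAr !entryD !entryZ.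
rewrite -/(qform u v) -/(qform v v) -/(qform u u) -/(qform v u) qformC; ring.
Qed.

Lemma psd_cauchy_schwarz u v : qform u v ^+ 2 <= qform u u * qform v v.
Proof. by rewrite mulrC; apply: quadratic_ge0_sqr_le => // t; rewrite -qform_line. Qed.

Lemma sqnorm_psd_mulmx_le z : sqnorm (M *m z) <= \tr M * qform z z.
Proof.
rewrite /mxtrace mulr_suml; apply: ler_sum => j _.
by rewrite -qform_delta_l -qform_delta psd_cauchy_schwarz.
Qed.

Lemma psd_unitmx_coercive : M \in unitmx ->
  exists2 c, 0 <= c & forall z, sqnorm z <= c * qform z z.
Proof.
move=> M_unit; set K := \sum_i \sum_j invmx M i j ^+ 2.
have K_ge0 : 0 <= K by do 2!apply: sumr_ge0 => ? _; apply: sqr_ge0.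
have tr_ge0 : 0 <= \tr M by apply: sumr_ge0 => j _; rewrite -qform_delta.
exists (K * \tr M) => [|z]; first exact: mulr_ge0.
rewrite -mulrA; apply: le_trans (ler_wpM2l K_ge0 (sqnorm_psd_mulmx_le z)).
by rewrite -{1}(mulKmx M_unit z); apply: sqnorm_mulmx_le.
Qed.

End QuadraticForms.

Lemma qform_gram_shift (R : realType) m k (A : 'M[R]_(m, k)) a z :
  qform (a%:M - A^T *m A) z z = a * sqnorm z - sqnorm (A *m z).
Proof.
rewrite /qform mulmxBr mulmxBl mul_mx_scalar -scalemxAl entryB entryZ.
by rewrite !sqnormE trmx_mul !mulmxA.
Qed.

Section Rayleigh.
Variables (R : realType) (m k : nat) (A : 'M[R]_(m, k)).
Hypothesis k_gt0 : (0 < k)%N.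

Definition rayleigh_set : set R :=
  [set e | exists2 z : 'cV[R]_k, sqnorm z = 1 & sqnorm (A *m z) = e].

Local Notation rho := (sup rayleigh_set).
Local Notation B := (A^T *m A).
Local Notation e0 := (delta_mx (Ordinal k_gt0) 0 : 'cV[R]_k).

Lemma rayleigh_set_e0 : rayleigh_set (sqnorm (A *m e0)).
Proof. by exists e0; rewrite ?sqnorm_delta. Qed.

Lemma has_sup_rayleigh : has_sup rayleigh_set.
Proof.
split; first by exists (sqnorm (A *m e0)); apply: rayleigh_set_e0.
exists (\sum_i \sum_j A i j ^+ 2) => _ [z z1 <-].
by rewrite -[X in _ <= X]mulr1 -z1 sqnorm_mulmx_le.
Qed.

Lemma sqnorm_mulmx_le_rayleigh z : sqnorm (A *m z) <= rho * sqnorm z.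
Proof.
have [->|z_neq0] := eqVneq z 0; first by rewrite mulmx0 !sqnorm0 mulr0.
set s := Num.sqrt (sqnorm z).
have s_gt0 : 0 < s by rewrite sqrtr_gt0 lt0r sqnorm_ge0 sqnorm_eq0 z_neq0.
have s2 : s ^+ 2 = sqnorm z by rewrite sqr_sqrtr // sqnorm_ge0.
have : rayleigh_set (sqnorm (A *m (s^-1 *: z))).
  by exists (s^-1 *: z); rewrite // sqnormZ -s2 exprVn mulVf // expf_neq0 // gt_eqF.
move/(sup_upper_bound has_sup_rayleigh).
by rewrite -scalemxAr sqnormZ exprVn -s2 ler_pdivrMl ?exprn_gt0 // mulrC.
Qed.

Lemma eigenvalue_gram_rayleigh : eigenvalue B rho.
Proof.
set M := rho%:M - B.
have M_sym : M^T = M by rewrite /M linearB /= tr_scalar_mx trmx_mul trmxK.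
have M_psd w : 0 <= qform M w w.
  by rewrite qform_gram_shift subr_ge0 sqnorm_mulmx_le_rayleigh.
apply/eqP; rewrite /eigenspace => ker0.
have M_unit : M \in unitmx.
  have -> : M = -1 *: (B - rho%:M) by rewrite scaleN1r opprB.
  by rewrite unitmxZ ?unitrN1 // -row_free_unit -kermx_eq0 ker0.
have [c c_ge0 coercive] := psd_unitmx_coercive M_sym M_psd M_unit.
have eps_gt0 : 0 < (c + 1)^-1 by rewrite invr_gt0; lra.
have [_ [z z1 <-] near_sup] := sup_adherent eps_gt0 has_sup_rayleigh.
have := coercive z; rewrite qform_gram_shift z1 mulr1.
have := sqnorm_mulmx_le_rayleigh z; rewrite z1 mulr1.
move: near_sup; set g := rho - sqnorm (A *m z).
rewrite ltrBlDr -ltrBlDl -/g -[X in g < X]mulr1 ltr_pdivlMl; last by lra.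
move=> cg_lt1 q_le_rho; have g_ge0 : 0 <= g by rewrite subr_ge0.
nra.
Qed.

Lemma eigenvalue_gram_le a : eigenvalue B a -> a <= rho.
Proof.
move=> /eigenvalueP[v vB v_neq0].
have z_gt0 : 0 < sqnorm v^T by rewrite lt0r sqnorm_ge0 sqnorm_eq0 trmx_eq0 v_neq0.
have : sqnorm (A *m v^T) = a * sqnorm v^T.
  by rewrite !sqnormE trmx_mul !trmxK !mulmxA -(mulmxA v) vB -scalemxAl mxE.
by move=> Az; rewrite -(ler_pM2r z_gt0) -Az sqnorm_mulmx_le_rayleigh.
Qed.

Lemma lambda_max_gram : lambda_max B = rho.
Proof.
have ub_rho : ubound [set a | eigenvalue B a] rho by move=> a /eigenvalue_gram_le.
apply/eqP; rewrite eq_le; apply/andP; split.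
  by apply: ge_sup => //; exists rho; apply: eigenvalue_gram_rayleigh.
apply: sup_upper_bound; last exact: eigenvalue_gram_rayleigh.
by split; [exists rho; apply: eigenvalue_gram_rayleigh | exists rho].
Qed.

Lemma lambda_max_gram_ge0 : 0 <= lambda_max B.
Proof.
rewrite lambda_max_gram; apply: le_trans (sqnorm_ge0 (A *m e0)) _.
exact: (sup_upper_bound has_sup_rayleigh rayleigh_set_e0).
Qed.

Lemma sqnorm_mulmx_le_lambda_max z : sqnorm (A *m z) <= lambda_max B * sqnorm z.
Proof. by rewrite lambda_max_gram sqnorm_mulmx_le_rayleigh. Qed.

End Rayleigh.

Section Sampling.
Variable R : realType.

Lemma card_draws_mem (T : finType) k (i : T) : (0 < k)%N ->
  #|[set tau : {set T} | #|tau| == k & i \in tau]| = 'C(#|T|.-1, k.-1).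
Proof.
move=> k_gt0; rewrite -(cardsC1 i) -cards_draws.
have notin_i (s : {set T}) : s \subset [set~ i] -> i \notin s.
  by move=> s_sub; apply/negP => /(fintype.subsetP s_sub); rewrite !inE eqxx.
rewrite -[RHS](@card_in_imset _ _ (fun s => i |: s)) => [|s1 s2]; last first.
  rewrite !inE => /andP[s1_sub _] /andP[s2_sub _] s12.
  rewrite -(finset.setU1K (notin_i _ s1_sub)) -(finset.setU1K (notin_i _ s2_sub)).
  by rewrite s12.
apply: eq_card => tau; rewrite !inE; apply/andP/imsetP => [[/eqP card_tau tau_i]|].
  exists (tau :\ i); last by rewrite finset.setD1K.
  rewrite !inE subsetDr /=.
  by rewrite (cardsD1 i tau) tau_i add1n in card_tau; rewrite -card_tau.
move=> [s]; rewrite inE => /andP[s_sub /eqP card_s] ->.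
by rewrite cardsU1 notin_i // card_s add1n prednK // finset.setU11.
Qed.

Lemma sum_draws_sum (T : finType) k (g : T -> R) : (0 < k)%N ->
  \sum_(tau : {set T} | #|tau| == k) \sum_(i in tau) g i =
  'C(#|T|.-1, k.-1)%:R * \sum_i g i.
Proof.
move=> k_gt0; under eq_bigr do rewrite big_mkcond /=.
rewrite exchange_big mulr_sumr; apply: eq_bigr => i _ /=.
rewrite -big_mkcondr sumr_const -(card_draws_mem i k_gt0) mulr_natl.
by congr (_ *+ _); apply: eq_card => tau; rewrite !inE.
Qed.

Section SampledMax.
Variables (m beta : nat) (r : 'I_m -> R).

Definition sampled_maxsq : R :=
  ('C(m, beta)%:R)^-1 *
  \sum_(tau : {set 'I_m} | #|tau| == beta)
     (2^-1 * (\big[Num.max/0]_(i in tau) r i) ^+ 2).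

Hypothesis r_ge0 : forall i, 0 <= r i.
Hypothesis beta_range : (0 < beta <= m)%N.

Local Notation rmax tau := (\big[Num.max/0]_(i in tau) r i).
Local Notation C := ('C(m, beta)%:R : R).
Local Notation sumsq := (\sum_i r i ^+ 2).
Local Notation Q := (\sum_(tau : {set 'I_m} | #|tau| == beta) rmax tau ^+ 2).

Let beta_gt0 : (0 < beta)%N. Proof. by case/andP: beta_range. Qed.
Let m_gt0 : (0 < m)%N. Proof. by case/andP: beta_range => /leq_trans; apply. Qed.
Let m_pos : 0 < m%:R :> R. Proof. by rewrite ltr0n. Qed.
Let C_gt0 : 0 < C. Proof. by rewrite ltr0n bin_gt0; case/andP: beta_range. Qed.

Lemma bigmax_sqr_le_sum (tau : {set 'I_m}) : rmax tau ^+ 2 <= \sum_(i in tau) r i ^+ 2.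
Proof.
have sum_ge0 : 0 <= \sum_(i in tau) r i ^+ 2 by apply: sumr_ge0 => i _; apply: sqr_ge0.
elim/big_ind: _ => [|x y x_le y_le|i i_tau]; first by rewrite expr0n.
  by rewrite maxEle; case: ifP.
by rewrite (bigD1 i) //= lerDl sumr_ge0 // => j _; apply: sqr_ge0.
Qed.

Lemma sum_sqr_le_card_bigmax (tau : {set 'I_m}) :
  \sum_(i in tau) r i ^+ 2 <= #|tau|%:R * rmax tau ^+ 2.
Proof.
rewrite mulr_natl -sumr_const; apply: ler_sum => i i_tau.
by rewrite ler_sqr ?nnegrE ?bigmax_ge_id ?le_bigmax_cond.
Qed.

Lemma sum_draws_sum_sqr :
  \sum_(tau : {set 'I_m} | #|tau| == beta) \sum_(i in tau) r i ^+ 2 =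
  beta%:R / m%:R * C * sumsq.
Proof.
rewrite sum_draws_sum // card_ord; congr (_ * _).
have bin_eq : 'C(m.-1, beta.-1)%:R * m%:R = beta%:R * C :> R.
  by rewrite -!natrM mulnC mul_bin_diag prednK.
by rewrite mulrAC -bin_eq mulfK // gt_eqF.
Qed.

Lemma sampled_maxsqE : sampled_maxsq = (2 * C)^-1 * Q.
Proof. by rewrite /sampled_maxsq -mulr_sumr invfM mulrCA mulrA. Qed.

Lemma sampled_maxsq_ge_sum : (2 * m%:R)^-1 * sumsq <= sampled_maxsq.
Proof.
have beta_pos : 0 < beta%:R :> R by rewrite ltr0n.
have : beta%:R * (C * sumsq / m%:R) <= beta%:R * Q.
  have -> : beta%:R * (C * sumsq / m%:R) = beta%:R / m%:R * C * sumsq.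
    by field; rewrite (gt_eqF m_pos).
  rewrite -sum_draws_sum_sqr mulr_sumr; apply: ler_sum => tau /eqP card_tau.
  by rewrite -card_tau sum_sqr_le_card_bigmax.
rewrite ler_pM2l // => CS_le_Q.
have -> : (2 * m%:R)^-1 * sumsq = (2 * C)^-1 * (C * sumsq / m%:R).
  by field; rewrite (gt_eqF m_pos) (gt_eqF C_gt0).
by rewrite sampled_maxsqE ler_wpM2l // invr_ge0 mulr_ge0 ?ltW.
Qed.

Lemma sampled_maxsq_le_sum : sampled_maxsq <= beta%:R / (2 * m%:R) * sumsq.
Proof.
have Q_le : Q <= beta%:R / m%:R * C * sumsq.
  by rewrite -sum_draws_sum_sqr; apply: ler_sum => tau _; apply: bigmax_sqr_le_sum.
have -> : beta%:R / (2 * m%:R) * sumsq = (2 * C)^-1 * (beta%:R / m%:R * C * sumsq).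
  by field; rewrite (gt_eqF m_pos) (gt_eqF C_gt0).
by rewrite sampled_maxsqE ler_wpM2l // invr_ge0 mulr_ge0 ?ltW.
Qed.

Lemma sampled_maxsq_le d : (forall i, r i <= d) -> sampled_maxsq <= d ^+ 2 / 2.
Proof.
move=> r_le_d; have d_ge0 : 0 <= d := le_trans (r_ge0 (Ordinal m_gt0)) (r_le_d _).
have Q_le : Q <= C * d ^+ 2.
  have -> : C * d ^+ 2 = \sum_(tau : {set 'I_m} | #|tau| == beta) d ^+ 2.
    rewrite sumr_const mulr_natl -[X in 'C(X, _)](card_ord m) -card_draws.
    by congr (_ *+ _); apply: eq_card => tau; rewrite inE.
  apply: ler_sum => tau _.
  by rewrite ler_sqr ?nnegrE ?bigmax_ge_id ?bigmax_le.
have -> : d ^+ 2 / 2 = (2 * C)^-1 * (C * d ^+ 2) by field; rewrite (gt_eqF C_gt0).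
by rewrite sampled_maxsqE ler_wpM2l // invr_ge0 mulr_ge0 ?ltW.
Qed.

End SampledMax.
End Sampling.

Section Distance.
Variables (R : realType) (n : nat) (S : set 'cV[R]_n) (x : 'cV[R]_n).
Hypothesis S_neq0 : (S !=set0)%classic.

Lemma dist_set_ge0 : 0 <= dist_set x S.
Proof.
apply: lb_le_inf; first by have [y Sy] := S_neq0; exists (enorm (x - y)), y.
by move=> _ [y _ <-]; apply: sqrtr_ge0.
Qed.

Lemma le_dist_set_sqr (c v : R) : 0 <= c ->
  (forall y, S y -> v <= c * enorm (x - y) ^+ 2) -> v <= c * dist_set x S ^+ 2.
Proof.
move=> c_ge0 v_le; have [y Sy] := S_neq0.
have [v_le0|v_gt0] := lerP v 0.
  by apply: le_trans v_le0 _; rewrite mulr_ge0 ?sqr_ge0.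
have c_gt0 : 0 < c.
  rewrite lt0r c_ge0 andbT; apply: contraTneq (v_le y Sy) => ->.
  by rewrite mul0r -ltNge.
set s := Num.sqrt (v / c).
have s2 : s ^+ 2 = v / c by rewrite sqr_sqrtr // divr_ge0 // ltW.
have s_le_dist : s <= dist_set x S.
  apply: lb_le_inf; first by exists (enorm (x - y)), y.
  move=> _ [w Sw <-]; rewrite -ler_sqr ?nnegrE ?sqrtr_ge0 //.
  by rewrite s2 ler_pdivrMr // mulrC v_le.
have -> : v = c * s ^+ 2 by rewrite s2 mulrC divfK // gt_eqF.
by rewrite ler_wpM2l // ler_sqr ?nnegrE ?sqrtr_ge0 ?dist_set_ge0.
Qed.

End Distance.

Lemma pos_ge0 (R : realType) (t : R) : 0 <= pos t.
Proof. by rewrite /pos le_max lexx orbT. Qed.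

Lemma pos_sqr_le (R : realType) (u w : R) : u <= w -> pos u ^+ 2 <= w ^+ 2.
Proof.
rewrite /pos maxEle; case: ifPn => [_ _|/negbTE u_gt0 u_le_w].
  by rewrite expr0n sqr_ge0.
by rewrite ler_sqr ?nnegrE // ?(le_trans _ u_le_w) // ltW // ltNge u_gt0.
Qed.

Lemma enorm_posv_sqr (R : realType) m n (A : 'M[R]_(m, n)) b x :
  enorm (posv (A *m x - b)) ^+ 2 = \sum_i resid A b x i ^+ 2.
Proof. by rewrite enorm_sqr; apply: eq_bigr => i _; rewrite mxE entryB. Qed.

Lemma fobjE (R : realType) m n beta (A : 'M[R]_(m, n)) b x :
  fobj beta A b x = sampled_maxsq beta (resid A b x).
Proof. by []. Qed.

Section Polyhedron.
Variables (R : realType) (m n : nat) (A : 'M[R]_(m, n)) (b : 'cV[R]_m).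
Hypothesis rows_unit : forall i, enorm (row i A)^T = 1.
Hypothesis P_neq0 : (polyh A b !=set0)%classic.

Lemma sum_row_sqr i : \sum_j A i j ^+ 2 = 1.
Proof.
have := congr1 (fun e => e ^+ 2) (rows_unit i); rewrite enorm_sqr expr1n => <-.
by apply: eq_bigr => j _; rewrite !mxE.
Qed.

Lemma sqr_mulmx_row_le i z : (A *m z) i 0 ^+ 2 <= sqnorm z.
Proof. by have := sqr_row_mulmx_le A i z; rewrite sum_row_sqr mul1r. Qed.

Lemma resid_sqr_le x y i : polyh A b y -> resid A b x i ^+ 2 <= (A *m (x - y)) i 0 ^+ 2.
Proof.
by move=> Py; apply: pos_sqr_le; rewrite mulmxBr entryB lerD2l lerN2 Py.
Qed.

Lemma resid_le_dist x i : resid A b x i <= dist_set x (polyh A b).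
Proof.
rewrite -ler_sqr ?nnegrE ?pos_ge0 ?dist_set_ge0 // -[X in _ <= X]mul1r.
apply: le_dist_set_sqr => // y Py; rewrite mul1r enorm_sqr.
exact: le_trans (resid_sqr_le x i Py) (sqr_mulmx_row_le i _).
Qed.

Lemma sum_resid_sqr_le x : (0 < n)%N ->
  \sum_i resid A b x i ^+ 2 <= lambda_max (A^T *m A) * dist_set x (polyh A b) ^+ 2.
Proof.
move=> n_gt0; apply: le_dist_set_sqr => [//||y Py]; first exact: lambda_max_gram_ge0.
rewrite enorm_sqr; apply: le_trans (sqnorm_mulmx_le_lambda_max A n_gt0 _).
by apply: ler_sum => i _; apply: resid_sqr_le.
Qed.

Lemma exists_far_point : (0 < m)%N -> exists x, 1 <= dist_set x (polyh A b) ^+ 2.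
Proof.
move=> m_gt0; have [y0 Py0] := P_neq0; pose i0 := Ordinal m_gt0.
have A_row_i0 : (A *m (row i0 A)^T) i0 0 = 1.
  by rewrite mxE -(sum_row_sqr i0); apply: eq_bigr => j _; rewrite !mxE expr2.
pose t := b i0 0 - (A *m y0) i0 0 + 1.
exists (y0 + t *: (row i0 A)^T); rewrite -[X in _ <= X]mul1r.
apply: le_dist_set_sqr => // y Py; rewrite mul1r enorm_sqr.
apply: le_trans (sqr_mulmx_row_le i0 _).
have : 1 <= (A *m (y0 + t *: (row i0 A)^T - y)) i0 0.
  rewrite mulmxBr mulmxDr -scalemxAr entryB entryD entryZ A_row_i0 /t.
  by have := Py i0; lra.
nra.
Qed.

Section Objective.
Variable beta : nat.
Hypothesis beta_range : (0 < beta <= m)%N.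

Let m_gt0 : (0 < m)%N. Proof. by case/andP: beta_range => /leq_trans; apply. Qed.
Let m_pos : 0 < m%:R :> R. Proof. by rewrite ltr0n. Qed.

Lemma fobj_ge_dist (L : R) x : 0 < L ->
    dist_set x (polyh A b) ^+ 2 <= L ^+ 2 * enorm (posv (A *m x - b)) ^+ 2 ->
  (m%:R * L ^+ 2)^-1 / 2 * dist_set x (polyh A b) ^+ 2 <= fobj beta A b x.
Proof.
move=> L_gt0 hoffman; rewrite fobjE.
apply: le_trans (sampled_maxsq_ge_sum (fun i => pos_ge0 _) beta_range).
have -> : (m%:R * L ^+ 2)^-1 / 2 * dist_set x (polyh A b) ^+ 2 =
    (2 * m%:R)^-1 * (dist_set x (polyh A b) ^+ 2 / L ^+ 2).
  by field; rewrite (gt_eqF m_pos) gt_eqF ?exprn_gt0.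
rewrite ler_pM2l ?invr_gt0 ?mulr_gt0 // ler_pdivrMr ?exprn_gt0 // mulrC.
by rewrite -enorm_posv_sqr.
Qed.

Lemma fobj_le_dist x : fobj beta A b x <=
  Num.min 1 (beta%:R / m%:R * lambda_max (A^T *m A)) / 2 * dist_set x (polyh A b) ^+ 2.
Proof.
set d := dist_set x _; rewrite fobjE minEle; case: ifP => _.
  rewrite mul1r mulrC; apply: sampled_maxsq_le => // i.
  - exact: pos_ge0.
  - exact: resid_le_dist.
apply: le_trans (sampled_maxsq_le_sum _ beta_range) _.
have n_gt0 : (0 < n)%N := enorm_eq1_dim_gt0 (rows_unit (Ordinal m_gt0)).
set lam := lambda_max _.
have -> : beta%:R / m%:R * lam / 2 * d ^+ 2 = beta%:R / (2 * m%:R) * (lam * d ^+ 2).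
  by field; rewrite (gt_eqF m_pos).
by apply: ler_wpM2l; [rewrite divr_ge0 ?mulr_ge0 | exact: sum_resid_sqr_le].
Qed.

End Objective.

End Polyhedron.

Theorem lemma6 (R : realType) (m n : nat) (A : 'M[R]_(m, n)) (b : 'cV[R]_m)
  (beta : nat) (L : R)
  (hrows : forall i : 'I_m, enorm (row i A)^T = 1)
  (hcons : exists x : 'cV[R]_n, polyh A b x)
  (hbeta : (1 <= beta <= m)%N)
  (hL : 0 < L)
  (hhoff : forall x : 'cV[R]_n,
      dist_set x (polyh A b) ^+ 2 <= L ^+ 2 * enorm (posv (A *m x - b)) ^+ 2) :
  let mu1 := (m%:R * L ^+ 2)^-1 in
  let mu2 := Num.min 1 (beta%:R / m%:R * lambda_max (A^T *m A)) in
  [/\ 0 < mu1, mu1 <= mu2, mu2 <= 1 &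
    forall x : 'cV[R]_n,
      mu1 / 2 * dist_set x (polyh A b) ^+ 2 <= fobj beta A b x /\
      fobj beta A b x <= mu2 / 2 * dist_set x (polyh A b) ^+ 2].
Proof.
move=> mu1 mu2; have m_gt0 : (0 < m)%N by case/andP: hbeta => /leq_trans; apply.
have mu1_gt0 : 0 < mu1 by rewrite invr_gt0 mulr_gt0 ?ltr0n // exprn_gt0.
have mu2_le1 : mu2 <= 1 by rewrite ge_min lexx.
have bounds x : mu1 / 2 * dist_set x (polyh A b) ^+ 2 <= fobj beta A b x /\
                fobj beta A b x <= mu2 / 2 * dist_set x (polyh A b) ^+ 2.
  by split; [apply: fobj_ge_dist | apply: fobj_le_dist].
split => //; have [x far] := exists_far_point hrows hcons m_gt0.
have [lower upper] := bounds x; have := le_trans lower upper.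
by rewrite ler_pM2r ?(lt_le_trans ltr01 far) // ler_pM2r // invr_gt0.
Qed.
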